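(* Let $B,C\in\mathcal{H}$ and let $\beta\in\underline{\mathcal{H}}(B,C)$ be a cokernel morphism in $\underline{\mathcal{H}}$, i.e. there is a morphism $f\in\mathscr{C}(A,B)$ with $A\in\mathcal{H}$ such that $\beta$ is a cokernel of $\underline{f}$ in $\underline{\mathcal{H}}$. Then there exist an object $C'\in\mathcal{H}$, a morphism $g\in\mathscr{C}(B,C')$ and an isomorphism $\eta\in\underline{\mathcal{H}}(C,C')$ such that (i) $\eta\circ\beta=\underline{g}$, and (ii) there is a distinguished triangle $S[-1]\overset{s}{\to}B\overset{g}{\to}C'\to S$ with $S\in\mathcal{S}$.
   Context: $\mathscr{C}$ is a triangulated category with shift $[1]$; subcategories are full, additive, closed under isomorphisms and direct summands. $\mathrm{Ext}^1(X,Y)=\mathscr{C}(X,Y[1])$. $\mathcal{M}\ast\mathcal{N}$ is the full subcategory of objects $C$ admitting a distinguished triangle $M\to C\to N\to M[1]$ with $M\in\mathcal{M}$, $N\in\mathcal{N}$. A cotorsion pair $(\mathcal{U},\mathcal{V})$: $\mathrm{Ext}^1(\mathcal{U},\mathcal{V})=0$ and $\mathscr{C}=\mathcal{U}\ast\mathcal{V}[1]$. Fix a twin cotorsion pair, i.e. cotorsion pairs $(\mathcal{S},\mathcal{T}),(\mathcal{U},\mathcal{V})$ with $\mathrm{Ext}^1(\mathcal{S},\mathcal{V})=0$. Put $\mathcal{W}=\mathcal{T}\cap\mathcal{U}$, $\mathscr{C}^-=\mathcal{S}[-1]\ast\mathcal{W}$, $\mathscr{C}^+=\mathcal{W}\ast\mathcal{V}[1]$,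 $\mathcal{H}=\mathscr{C}^+\cap\mathscr{C}^-$. $\underline{\mathcal{H}}$ is the ideal quotient of $\mathcal{H}$ by morphisms factoring through objects of $\mathcal{W}$, and $\underline{f}$ is the image of $f$. ($\underline{\mathcal{H}}$ is preabelian, so cokernels exist.) *)

From HB Require Import structures.
From mathcomp Require Import all_boot all_algebra.
Set Implicit Arguments. Unset Strict Implicit. Unset Printing Implicit Defensive.
Import GRing.Theory.
Local Open Scope ring_scope.

Record tcat := TCat {
  Ob : Type;
  Mor : Ob -> Ob -> zmodType;
  compm : forall X Y Z : Ob, Mor Y Z -> Mor X Y -> Mor X Z;
  idm : forall X : Ob, Mor X X;
  shift : Ob -> Ob;
  shiftm : forall X Y : Ob, Mor X Y -> Mor (shift X) (shift Y);
  dist : forall X Y Z : Ob, Mor X Y -> Mor Y Z -> Mor Z (shift X) -> Prop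
}.
Arguments compm {t X Y Z}.
Arguments idm {t}.
Arguments shift {t}.
Arguments shiftm {t X Y}.
Arguments dist {t X Y Z}.

Section Triangulated.
Variable C : tcat.
Local Notation Ob := (Ob C).
Local Notation Mor := (@Mor C).

Definition iso (X Y : Ob) : Prop :=
  exists (f : Mor X Y) (g : Mor Y X), compm g f = idm X /\ compm f g = idm Y.

Definition is_zero_obj (Z : Ob) : Prop := idm Z = 0.

Definition is_biprod (X Y P : Ob) (i1 : Mor X P) (i2 : Mor Y P)
    (p1 : Mor P X) (p2 : Mor P Y) : Prop :=
  [/\ compm p1 i1 = idm X, compm p2 i2 = idm Y, compm p1 i2 = 0, compm p2 i1 = 0
    & compm i1 p1 + compm i2 p2 = idm P].

Definition additive_axioms : Prop :=
  (forall (X Y Z W : Ob) (h : Mor Z W) (g : Mor Y Z) (f : Mor X Y),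
         compm h (compm g f) = compm (compm h g) f) /\
      (forall (X Y : Ob) (f : Mor X Y), compm (idm Y) f = f /\ compm f (idm X) = f) /\
      (forall (X Y Z : Ob) (g1 g2 : Mor Y Z) (f : Mor X Y),
         compm (g1 + g2) f = compm g1 f + compm g2 f) /\
      (forall (X Y Z : Ob) (g : Mor Y Z) (f1 f2 : Mor X Y),
         compm g (f1 + f2) = compm g f1 + compm g f2) /\
      (exists Z : Ob, is_zero_obj Z) /\
      (forall X Y : Ob, exists (P : Ob) (i1 : Mor X P) (i2 : Mor Y P)
         (p1 : Mor P X) (p2 : Mor P Y), is_biprod i1 i2 p1 p2).

Definition shift_axioms : Prop :=
  (forall X : Ob, shiftm (idm X) = idm (shift X)) /\
      (forall (X Y Z : Ob) (g : Mor Y Z) (f : Mor X Y),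
         shiftm (compm g f) = compm (shiftm g) (shiftm f)) /\
      (forall (X Y : Ob) (f g : Mor X Y), shiftm (f + g) = shiftm f + shiftm g) /\
      (forall (X Y : Ob) (f g : Mor X Y), shiftm f = shiftm g -> f = g) /\
      (forall (X Y : Ob) (h : Mor (shift X) (shift Y)), exists f : Mor X Y, shiftm f = h) /\
  (forall Y : Ob, exists X : Ob, iso (shift X) Y).

Definition TR0 : Prop :=
  forall (X Y Z X' Y' Z' : Ob) (u : Mor X Y) (v : Mor Y Z) (w : Mor Z (shift X))
    (u' : Mor X' Y') (v' : Mor Y' Z') (w' : Mor Z' (shift X'))
    (a : Mor X X') (b : Mor Y Y') (c : Mor Z Z')
    (a' : Mor X' X) (b' : Mor Y' Y) (c' : Mor Z' Z),
    compm a' a = idm X -> compm a a' = idm X' ->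
    compm b' b = idm Y -> compm b b' = idm Y' ->
    compm c' c = idm Z -> compm c c' = idm Z' ->
    compm b u = compm u' a -> compm c v = compm v' b -> compm (shiftm a) w = compm w' c ->
    dist u v w -> dist u' v' w'.

Definition TR1 : Prop :=
  (forall (X Z : Ob), is_zero_obj Z ->
     dist (idm X) (0 : Mor X Z) (0 : Mor Z (shift X))) /\
  (forall (X Y : Ob) (u : Mor X Y), exists (Z : Ob) (v : Mor Y Z) (w : Mor Z (shift X)),
     dist u v w).

Definition TR2 : Prop :=
  forall (X Y Z : Ob) (u : Mor X Y) (v : Mor Y Z) (w : Mor Z (shift X)),
    dist u v w <-> dist v w (- shiftm u).

Definition TR3 : Prop :=
  forall (X Y Z X' Y' Z' : Ob) (u : Mor X Y) (v : Mor Y Z) (w : Mor Z (shift X))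
    (u' : Mor X' Y') (v' : Mor Y' Z') (w' : Mor Z' (shift X'))
    (a : Mor X X') (b : Mor Y Y'),
    dist u v w -> dist u' v' w' -> compm b u = compm u' a ->
    exists c : Mor Z Z', compm c v = compm v' b /\ compm (shiftm a) w = compm w' c.

Definition TR4 : Prop :=
  forall (X Y Z Z' X' Y' : Ob) (u : Mor X Y) (v : Mor Y Z)
    (j : Mor Y Z') (k : Mor Z' (shift X))
    (l : Mor Z X') (i : Mor X' (shift Y))
    (m : Mor Z Y') (n : Mor Y' (shift X)),
    dist u j k -> dist v l i -> dist (compm v u) m n ->
    exists (f : Mor Z' Y') (g : Mor Y' X'),
      [/\ dist f g (compm (shiftm j) i), compm m v = compm f j, compm n f = k,
          compm g m = l & compm i g = compm (shiftm u) n].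

Definition triangulated : Prop :=
  [/\ additive_axioms, shift_axioms, TR0, TR1 & TR2] /\ TR3 /\ TR4.

Definition subcat (P : Ob -> Prop) : Prop :=
  [/\ (forall Z : Ob, is_zero_obj Z -> P Z),
      (forall (X Y B : Ob) (i1 : Mor X B) (i2 : Mor Y B) (p1 : Mor B X) (p2 : Mor B Y),
         is_biprod i1 i2 p1 p2 -> P X -> P Y -> P B),
      (forall X Y : Ob, iso X Y -> P X -> P Y)
    & (forall (X Y B : Ob) (i1 : Mor X B) (i2 : Mor Y B) (p1 : Mor B X) (p2 : Mor B Y),
         is_biprod i1 i2 p1 p2 -> P B -> P X)].

(* P[1] and P[-1] (as iso-closed subcategories) *)
Definition shift_sub (P : Ob -> Prop) : Ob -> Prop :=
  fun N => exists V : Ob, P V /\ iso N (shift V).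
Definition unshift_sub (P : Ob -> Prop) : Ob -> Prop :=
  fun M => P (shift M).

Definition Ext1_zero (P Q : Ob -> Prop) : Prop :=
  forall X Y : Ob, P X -> Q Y -> forall f : Mor X (shift Y), f = 0.

Definition star (P Q : Ob -> Prop) : Ob -> Prop :=
  fun X => exists (M N : Ob) (u : Mor M X) (v : Mor X N) (w : Mor N (shift M)),
    [/\ P M, Q N & dist u v w].

Definition cotorsion_pair (U V : Ob -> Prop) : Prop :=
  [/\ subcat U, subcat V, Ext1_zero U V & forall X : Ob, star U (shift_sub V) X].

Definition twin_cotorsion_pair (S T U V : Ob -> Prop) : Prop :=
  [/\ cotorsion_pair S T, cotorsion_pair U V & Ext1_zero S V].

Section Heart.
Variables S T U V : Ob -> Prop.

Definition Wsub : Ob -> Prop := fun X => T X /\ U X.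
Definition Cminus : Ob -> Prop := star (unshift_sub S) Wsub.
Definition Cplus : Ob -> Prop := star Wsub (shift_sub V).
Definition Hsub : Ob -> Prop := fun X => Cplus X /\ Cminus X.

Definition factors_W (X Y : Ob) (f : Mor X Y) : Prop :=
  exists (W : Ob) (a : Mor X W) (b : Mor W Y), Wsub W /\ f = compm b a.

(* equality in the ideal quotient H/[W] *)
Definition eqW (X Y : Ob) (f g : Mor X Y) : Prop := factors_W (f - g).

Definition isoW (X Y : Ob) (e : Mor X Y) : Prop :=
  exists e' : Mor Y X, eqW (compm e' e) (idm X) /\ eqW (compm e e') (idm Y).

Definition is_cokernelW (A B Cc : Ob) (f : Mor A B) (beta : Mor B Cc) : Prop :=
  [/\ eqW (compm beta f) 0
    & forall (D : Ob) (h : Mor B D), Hsub D -> eqW (compm h f) 0 ->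
        (exists h' : Mor Cc D, eqW (compm h' beta) h) /\
        (forall h1 h2 : Mor Cc D, eqW (compm h1 beta) h ->
           eqW (compm h2 beta) h -> eqW h1 h2)].

End Heart.
End Triangulated.

From mathcomp Require Import all_boot all_algebra.
Import GRing.Theory.
Local Open Scope ring_scope.
Set Implicit Arguments. Unset Strict Implicit.

(* Write A as a triangle XA -> A -> WA -> XA[1] with XA[1] in S and WA in W,
   and let z : B -> Z be the cone of the composite XA -> A -> B.  Every object
   Z has a reflection q : Z -> C' into C^+ whose cone lies in S: take a
   U-approximation UZ -> Z, an S[-1]-approximation K -> UZ of it, and the cone
   of K -> Z.  By the octahedral axiom and the extension closedness of S the
   composite g = q z again has its cone in S.  This puts C' in C^-, makes g
   an epimorphism modulo W and a cokernel of f modulo W, so g agrees with beta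
   up to an isomorphism of the quotient. *)

Section Triangulated.
Variable C : tcat.
Hypothesis HC : triangulated C.
Local Notation Ob := (Ob C).
Local Notation Mor := (@Mor C).

Lemma compmA (X Y Z W : Ob) (h : Mor Z W) (g : Mor Y Z) (f : Mor X Y) :
  compm h (compm g f) = compm (compm h g) f.
Proof. by case: HC => [[[H _] _ _ _ _] _]; apply: H. Qed.

Lemma comp1m (X Y : Ob) (f : Mor X Y) : compm (idm Y) f = f.
Proof. by case: HC => [[[_ [H _]] _ _ _ _] _]; case: (H _ _ f). Qed.

Lemma compm1 (X Y : Ob) (f : Mor X Y) : compm f (idm X) = f.
Proof. by case: HC => [[[_ [H _]] _ _ _ _] _]; case: (H _ _ f). Qed.

Lemma compmDl (X Y Z : Ob) (g1 g2 : Mor Y Z) (f : Mor X Y) :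
  compm (g1 + g2) f = compm g1 f + compm g2 f.
Proof. by case: HC => [[[_ [_ [H _]]] _ _ _ _] _]; apply: H. Qed.

Lemma compmDr (X Y Z : Ob) (g : Mor Y Z) (f1 f2 : Mor X Y) :
  compm g (f1 + f2) = compm g f1 + compm g f2.
Proof. by case: HC => [[[_ [_ [_ [H _]]]] _ _ _ _] _]; apply: H. Qed.

Lemma zero_obj_exists : exists Z : Ob, is_zero_obj Z.
Proof. by case: HC => [[[_ [_ [_ [_ [H _]]]]] _ _ _ _] _]. Qed.

Lemma biprod_exists (X Y : Ob) : exists (P : Ob) (i1 : Mor X P) (i2 : Mor Y P)
  (p1 : Mor P X) (p2 : Mor P Y), is_biprod i1 i2 p1 p2.
Proof. by case: HC => [[[_ [_ [_ [_ [_ H]]]]] _ _ _ _] _]. Qed.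

Lemma shiftm1 (X : Ob) : shiftm (idm X) = idm (shift X).
Proof. by case: HC => [[_ [H _] _ _ _] _]. Qed.

Lemma shiftmM (X Y Z : Ob) (g : Mor Y Z) (f : Mor X Y) :
  shiftm (compm g f) = compm (shiftm g) (shiftm f).
Proof. by case: HC => [[_ [_ [H _]] _ _ _] _]. Qed.

Lemma shiftmD (X Y : Ob) (f g : Mor X Y) : shiftm (f + g) = shiftm f + shiftm g.
Proof. by case: HC => [[_ [_ [_ [H _]]] _ _ _] _]. Qed.

Lemma shiftm_inj (X Y : Ob) (f g : Mor X Y) : shiftm f = shiftm g -> f = g.
Proof. by case: HC => [[_ [_ [_ [_ [H _]]]] _ _ _] _]; apply: H. Qed.

Lemma shiftm_surj (X Y : Ob) (h : Mor (shift X) (shift Y)) :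
  exists f : Mor X Y, shiftm f = h.
Proof. by case: HC => [[_ [_ [_ [_ [_ [H _]]]]] _ _ _] _]. Qed.

Lemma shift_ess_surj (Y : Ob) : exists X : Ob, iso (shift X) Y.
Proof. by case: HC => [[_ [_ [_ [_ [_ [_ H]]]]] _ _ _] _]. Qed.

Lemma dist_iso : TR0 C.
Proof. by case: HC => [[_ _ H _ _] _]. Qed.

Lemma dist_id (X Z : Ob) :
  is_zero_obj Z -> dist (idm X) (0 : Mor X Z) (0 : Mor Z (shift X)).
Proof. by case: HC => [[_ _ _ [H _] _] _]; apply: H. Qed.

Lemma dist_complete (X Y : Ob) (u : Mor X Y) :
  exists (Z : Ob) (v : Mor Y Z) (w : Mor Z (shift X)), dist u v w.
Proof. by case: HC => [[_ _ _ [_ H] _] _]. Qed.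

Lemma dist_rot (X Y Z : Ob) (u : Mor X Y) (v : Mor Y Z) (w : Mor Z (shift X)) :
  dist u v w <-> dist v w (- shiftm u).
Proof. by case: HC => [[_ _ _ _ H] _]. Qed.

Lemma dist_morph : TR3 C.
Proof. by case: HC => [_ [H _]]. Qed.

Lemma octahedral : TR4 C.
Proof. by case: HC => [_ [_ H]]. Qed.

Lemma dist_rotate (X Y Z : Ob) (u : Mor X Y) (v : Mor Y Z) (w : Mor Z (shift X)) :
  dist u v w -> dist v w (- shiftm u).
Proof. exact: (dist_rot u v w).1. Qed.

Lemma comp0m (X Y Z : Ob) (f : Mor X Y) : compm (0 : Mor Y Z) f = 0.
Proof. by apply: (addIr (compm (0 : Mor Y Z) f)); rewrite -compmDl !add0r. Qed.

Lemma compm0 (X Y Z : Ob) (g : Mor Y Z) : compm g (0 : Mor X Y) = 0.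
Proof. by apply: (addIr (compm g (0 : Mor X Y))); rewrite -compmDr !add0r. Qed.

Lemma compNm (X Y Z : Ob) (g : Mor Y Z) (f : Mor X Y) : compm (- g) f = - compm g f.
Proof. by apply: (addrI (compm g f)); rewrite -compmDl !subrr comp0m. Qed.

Lemma compmN (X Y Z : Ob) (g : Mor Y Z) (f : Mor X Y) : compm g (- f) = - compm g f.
Proof. by apply: (addrI (compm g f)); rewrite -compmDr !subrr compm0. Qed.

Lemma compBm (X Y Z : Ob) (g1 g2 : Mor Y Z) (f : Mor X Y) :
  compm (g1 - g2) f = compm g1 f - compm g2 f.
Proof. by rewrite compmDl compNm. Qed.

Lemma compmB (X Y Z : Ob) (g : Mor Y Z) (f1 f2 : Mor X Y) :
  compm g (f1 - f2) = compm g f1 - compm g f2.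
Proof. by rewrite compmDr compmN. Qed.

Lemma shiftm0 (X Y : Ob) : shiftm (0 : Mor X Y) = 0.
Proof. by apply: (addIr (shiftm (0 : Mor X Y))); rewrite -shiftmD !add0r. Qed.

Lemma shiftmN (X Y : Ob) (f : Mor X Y) : shiftm (- f) = - shiftm f.
Proof. by apply: (addrI (shiftm f)); rewrite -shiftmD !subrr shiftm0. Qed.

Lemma dist_zero_id (Z D : Ob) :
  is_zero_obj Z -> dist (0 : Mor Z D) (idm D) (0 : Mor D (shift Z)).
Proof.
move=> hZ; apply/dist_rot; rewrite shiftm0 oppr0.
by apply: dist_id; rewrite /is_zero_obj -shiftm1 hZ shiftm0.
Qed.

Lemma dist_comp0 (X Y Z : Ob) (u : Mor X Y) (v : Mor Y Z) (w : Mor Z (shift X)) :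
  dist u v w -> compm v u = 0.
Proof.
move=> hd; have [Z0 hZ0] := zero_obj_exists.
have [c [hc _]] := dist_morph (dist_id X hZ0) hd (a := idm X) (b := u) (erefl _).
by rewrite -hc compm0.
Qed.

Lemma dist_coker_factor (X Y Z D : Ob) (u : Mor X Y) (v : Mor Y Z)
    (w : Mor Z (shift X)) (h : Mor Y D) :
  dist u v w -> compm h u = 0 -> exists c : Mor Z D, h = compm c v.
Proof.
move=> hd hu; have [Z0 hZ0] := zero_obj_exists.
have hu0 : compm h u = compm (0 : Mor Z0 D) (0 : Mor X Z0) by rewrite comp0m.
have [c [hc _]] := dist_morph hd (dist_zero_id D hZ0) hu0.
by exists c; rewrite hc comp1m.
Qed.

Lemma dist_ker_factor (X Y Z D : Ob) (u : Mor X Y) (v : Mor Y Z)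
    (w : Mor Z (shift X)) (h : Mor D Y) :
  dist u v w -> compm v h = 0 -> exists c : Mor D X, h = compm u c.
Proof.
move=> hd hv; have [Z0 hZ0] := zero_obj_exists.
have hd0 := dist_rotate (dist_id D hZ0).
have hv0 : compm (0 : Mor Z0 Z) (0 : Mor D Z0) = compm v h by rewrite comp0m.
have [c [_ hc]] := dist_morph hd0 (dist_rotate hd) hv0.
have [c0 hc0] := shiftm_surj c.
exists c0; apply: shiftm_inj; rewrite shiftmM hc0.
by move: hc; rewrite compmN compNm shiftm1 compm1 => /oppr_inj.
Qed.

Lemma iso_sym (X Y : Ob) : iso X Y -> iso Y X.
Proof. by case=> f [g [h1 h2]]; exists g, f. Qed.

Lemma dist_conj_ends (X Y Z X' Z' : Ob) (u : Mor X Y) (v : Mor Y Z)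
    (w : Mor Z (shift X)) (ix : Mor X X') (jx : Mor X' X) (iz : Mor Z Z') (jz : Mor Z' Z) :
  compm jx ix = idm X -> compm ix jx = idm X' ->
  compm jz iz = idm Z -> compm iz jz = idm Z' ->
  dist u v w -> dist (compm u jx) (compm iz v) (compm (compm (shiftm ix) w) jz).
Proof.
move=> hx1 hx2 hz1 hz2.
apply: (dist_iso (a := ix) (b := idm Y) (c := iz) (a' := jx) (b' := idm Y) (c' := jz)).
- by [].
- by [].
- exact: comp1m.
- exact: comp1m.
- by [].
- by [].
- by rewrite comp1m -compmA hx1 compm1.
- by rewrite compm1.
- by rewrite -compmA hz1 compm1.
Qed.

Lemma dist_unshift (K Y T0 : Ob) (a : Mor (shift K) (shift Y))
    (b : Mor (shift Y) (shift T0)) (c : Mor (shift T0) (shift (shift K))) :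
  dist a b c -> exists (k : Mor K Y) (p : Mor Y T0) (r : Mor T0 (shift K)), dist k p r.
Proof.
move=> hd.
have [c0 hc0] := shiftm_surj c; have [b0 hb0] := shiftm_surj b.
have [a0 ha0] := shiftm_surj a.
have hd1 : dist (- c0) a b by apply/dist_rot; rewrite shiftmN opprK hc0.
have hd2 : dist (- b0) (- c0) a by apply/dist_rot; rewrite shiftmN opprK hb0.
have hd3 : dist (- a0) (- b0) (- c0) by apply/dist_rot; rewrite shiftmN opprK ha0.
by exists (- a0), (- b0), (- c0).
Qed.

Lemma dist_unrotate (Y Z Y' : Ob) (v : Mor Y Z) (w : Mor Z Y') (n : Mor Y' (shift Y)) :
  dist v w n ->
  exists (X : Ob) (s : Mor X Y) (h : Mor Z (shift X)), iso (shift X) Y' /\ dist s v h.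
Proof.
move=> hd; have [X hX] := shift_ess_surj Y'.
have [i0 [j0 [h1 h2]]] := hX.
have hdX := dist_conj_ends (comp1m (idm Y)) (comp1m (idm Y)) h2 h1 hd.
rewrite compm1 shiftm1 comp1m in hdX.
have [s hs] := shiftm_surj (- compm n i0).
by exists X, s, (compm j0 w); split => //; apply/dist_rot; rewrite hs opprK.
Qed.

(* If r f = 1, the cone E of f gives a splitting M = X (+) E. *)
Lemma subcat_retract (P : Ob -> Prop) (X M : Ob) (f : Mor X M) (r : Mor M X) :
  subcat P -> compm r f = idm X -> P M -> P X.
Proof.
move=> [_ _ _ hsum] hrf hM.
have [E [d [e hd]]] := dist_complete f.
have hd' := dist_rotate hd; have hd'' := dist_rotate hd'.
have he : e = 0.
  move: (dist_comp0 hd''); rewrite compNm => /eqP; rewrite oppr_eq0 => /eqP he.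
  by rewrite -[e]comp1m -shiftm1 -hrf shiftmM -compmA he compm0.
have [d' hd'd] : exists d' : Mor E M, idm E = compm d d'.
  by apply: (dist_ker_factor hd'); rewrite he comp0m.
have [psi hpsi] : exists psi : Mor E M, idm M - compm f r = compm psi d.
  by apply: (dist_coker_factor hd); rewrite compBm comp1m -compmA hrf compm1 subrr.
have hdf : compm d f = 0 := dist_comp0 hd.
apply: (hsum X E M f (d' - compm f (compm r d')) r d) hM; split.
- by [].
- by rewrite compmB compmA compmA hdf !comp0m subr0.
- by rewrite compmB compmA hrf comp1m subrr.
- exact: hdf.
- have key : compm (idm M - compm f r) (idm M - compm d' d) = 0.
    by rewrite hpsi -compmA compmB compm1 compmA -hd'd comp1m subrr compm0.
  move: key; rewrite compmB compm1 compBm comp1m => /eqP; rewrite subr_eq0 => /eqP key.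
  have e1 : compm (compm f (compm r d')) d = compm (compm f r) (compm d' d) by rewrite !compmA.
  by rewrite compBm e1 -key addrC subrK.
Qed.

Lemma subcat_iso (P : Ob -> Prop) (X Y : Ob) : subcat P -> iso X Y -> P X -> P Y.
Proof. by case=> _ _ H _; apply: H. Qed.

Lemma Ext1_zero_shift_sub (P Q : Ob -> Prop) (X N : Ob) :
  Ext1_zero P Q -> P X -> shift_sub Q N -> forall phi : Mor X N, phi = 0.
Proof.
move=> hE hX [V0 [hV [i [j [h1 h2]]]]] phi.
by rewrite -[phi]comp1m -h1 -compmA (hE _ _ hX hV (compm i phi)) compm0.
Qed.

Lemma Ext1_zero_unshift (P Q : Ob -> Prop) (K Y : Ob) :
  Ext1_zero P Q -> P (shift K) -> Q Y -> forall l : Mor K Y, l = 0.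
Proof. by move=> hE hK hY l; apply: shiftm_inj; rewrite shiftm0; apply: hE. Qed.

Section Cotorsion.
Variables P Q : Ob -> Prop.
Hypothesis hPQ : cotorsion_pair P Q.

Lemma cotorsion_triangle (Y : Ob) :
  exists (M N : Ob) (u : Mor M Y) (v : Mor Y N) (w : Mor N (shift M)),
    [/\ P M, shift_sub Q N & dist u v w].
Proof. by case: hPQ => _ _ _; apply. Qed.

Lemma cotorsion_triangle_unshift (Y : Ob) :
  exists (K T0 : Ob) (k : Mor K Y) (p : Mor Y T0) (r : Mor T0 (shift K)),
    [/\ P (shift K), Q T0 & dist k p r].
Proof.
have [M [N [u [v [w [hM [V0 [hV [i [j [hN1 hN2]]]]] hd]]]]]] :=
  cotorsion_triangle (shift Y).
have [K hK] := shift_ess_surj M; have [i0 [j0 [hK1 hK2]]] := hK.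
have [k [p [r hd']]] := dist_unshift (dist_conj_ends hK2 hK1 hN1 hN2 hd).
exists K, V0, k, p, r; split => //.
by case: hPQ => hP _ _ _; apply: subcat_iso hP (iso_sym hK) hM.
Qed.

Lemma cotorsion_left_perp (X : Ob) :
  (forall Q0 : Ob, Q Q0 -> forall phi : Mor X (shift Q0), phi = 0) -> P X.
Proof.
move=> hX.
have [M [N [u [v [w [hM [V0 [hV [i [j [hN1 hN2]]]]] hd]]]]]] := cotorsion_triangle X.
have hv : v = 0 by rewrite -[v]comp1m -hN1 -compmA (hX _ hV (compm i v)) compm0.
have [c hc] : exists c : Mor X M, idm X = compm u c.
  by apply: (dist_ker_factor hd); rewrite hv comp0m.
by case: hPQ => hP _ _ _; apply: (subcat_retract hP (esym hc) hM).
Qed.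

Lemma cotorsion_left_ext (X Y Z : Ob) (a : Mor X Y) (b : Mor Y Z) (c : Mor Z (shift X)) :
  P X -> P Z -> dist a b c -> P Y.
Proof.
case: hPQ => _ _ hE _ hX hZ hd; apply: cotorsion_left_perp => Q0 hQ0 phi.
have [c' ->] := dist_coker_factor hd (hE _ _ hX hQ0 (compm phi a)).
by rewrite (hE _ _ hZ hQ0 c') comp0m.
Qed.

End Cotorsion.

Section Heart.
Variables S T U V : Ob -> Prop.
Hypothesis Htw : twin_cotorsion_pair S T U V.

Let cotST : cotorsion_pair S T. Proof. by case: Htw. Qed.
Let cotUV : cotorsion_pair U V. Proof. by case: Htw. Qed.
Let extST : Ext1_zero S T. Proof. by case: cotST. Qed.
Let extUV : Ext1_zero U V. Proof. by case: cotUV. Qed.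
Let extSV : Ext1_zero S V. Proof. by case: Htw. Qed.

Local Notation W := (Wsub T U).

Definition cone_in_S (X Y : Ob) (g : Mor X Y) : Prop :=
  exists (K : Ob) (s : Mor K X) (h : Mor Y (shift K)), S (shift K) /\ dist s g h.

Lemma factors_W0 (X Y : Ob) : factors_W T U (0 : Mor X Y).
Proof.
have [Z hZ] := zero_obj_exists.
have hWZ : W Z by case: cotST cotUV => _ [hT _ _ _] _ _ [[hU _ _ _] _ _ _]; split; auto.
by exists Z, 0, 0; rewrite comp0m.
Qed.

Lemma factors_W_compl (X Y Y' : Ob) (f : Mor X Y) (g : Mor Y Y') :
  factors_W T U f -> factors_W T U (compm g f).
Proof. by case=> [W0 [a [b [hW ->]]]]; exists W0, a, (compm g b); rewrite compmA. Qed.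

Lemma factors_WD (X Y : Ob) (f1 f2 : Mor X Y) :
  factors_W T U f1 -> factors_W T U f2 -> factors_W T U (f1 + f2).
Proof.
case=> [W1 [a1 [b1 [[hT1 hU1] ->]]]] [W2 [a2 [b2 [[hT2 hU2] ->]]]].
have [P [i1 [i2 [p1 [p2 hb]]]]] := biprod_exists W1 W2.
exists P, (compm i1 a1 + compm i2 a2), (compm b1 p1 + compm b2 p2); split.
  case: cotST cotUV => _ [_ hT _ _] _ _ [[_ hU _ _] _ _ _].
  by split; [exact: hT hb hT1 hT2 | exact: hU hb hU1 hU2].
case: hb => e11 e22 e12 e21 _.
rewrite compmDr !compmDl -!compmA !(compmA p1) !(compmA p2) e11 e22 e12 e21.
by rewrite !comp1m !comp0m !compm0 addr0 add0r.
Qed.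

Lemma factors_W_comp_unshift (K X Y : Ob) (x : Mor K X) (h : Mor X Y) :
  S (shift K) -> factors_W T U h -> compm h x = 0.
Proof.
move=> hK [W0 [a [b [[hT _] ->]]]].
by rewrite -compmA (Ext1_zero_unshift extST hK hT (compm a x)) compm0.
Qed.

Lemma U_cone_of_S (K X Y : Ob) (k : Mor K X) (p : Mor X Y) (r : Mor Y (shift K)) :
  S (shift K) -> U X -> dist k p r -> U Y.
Proof.
move=> hK hX hd; apply: (cotorsion_left_perp cotUV) => V0 hV0 phi.
have [c ->] := dist_coker_factor (dist_rotate hd) (extUV hX hV0 (compm phi p)).
by rewrite (extSV hK hV0 c) comp0m.
Qed.

Lemma cone_in_S_comp (X Y Z : Ob) (u : Mor X Y) (v : Mor Y Z) :
  cone_in_S u -> cone_in_S v -> cone_in_S (compm v u).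
Proof.
move=> [K1 [s1 [h1 [hK1 hd1]]]] [K2 [s2 [h2 [hK2 hd2]]]].
have [Y' [m [n hdvu]]] := dist_complete (compm v u).
have [e1 [e2 [hext _ _ _ _]]] := octahedral (dist_rotate hd1) (dist_rotate hd2) hdvu.
have hY' : S Y' := cotorsion_left_ext cotST hK1 hK2 hext.
have [K [s [h [hK hd]]]] := dist_unrotate hdvu.
exists K, s, h; split => //.
by case: cotST => hS _ _ _; apply: subcat_iso hS (iso_sym hK) hY'.
Qed.

Lemma CminusP (Y : Ob) : Cminus S T U Y <->
  (forall V0 : Ob, V V0 -> forall chi : Mor Y (shift V0),
     (forall K : Ob, S (shift K) -> forall l : Mor K Y, compm chi l = 0) -> chi = 0).
Proof.
split.
  case=> [M [W0 [m [a [w [hM [_ hW0] hd]]]]]] V0 hV0 chi hchi.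
  have [c ->] := dist_coker_factor hd (hchi _ hM m).
  by rewrite (extUV hW0 hV0 c) comp0m.
move=> hY.
have [K [T0 [k [p [r [hK hT0 hd]]]]]] := cotorsion_triangle_unshift cotST Y.
exists K, T0, k, p, r; split => //; split => //.
apply: (cotorsion_left_perp cotUV) => V0 hV0 phi.
have hphi : compm phi p = 0.
  apply: hY => // K' hK' l.
  by rewrite -compmA (Ext1_zero_unshift extST hK' hT0 (compm p l)) compm0.
have [c ->] := dist_coker_factor (dist_rotate hd) hphi.
by rewrite (extSV hK hV0 c) comp0m.
Qed.

Lemma Cminus_cone_in_S (X Y : Ob) (g : Mor X Y) :
  Cminus S T U X -> cone_in_S g -> Cminus S T U Y.
Proof.
move=> /CminusP hX [K [s [h [hK hd]]]]; apply/CminusP => V0 hV0 chi hchi.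
have hchig : compm chi g = 0 by apply: hX => // K' hK' l; rewrite -compmA hchi.
have [c ->] := dist_coker_factor (dist_rotate hd) hchig.
by rewrite (extSV hK hV0 c) comp0m.
Qed.

Lemma factors_W_cancel (X Y D : Ob) (g : Mor X Y) (h1 : Mor Y D) :
  cone_in_S g -> Cplus T U V D -> factors_W T U (compm h1 g) -> factors_W T U h1.
Proof.
move=> [K [s [h [hK hd]]]] [WD [ND [al [be [ga [hWD hND hdD]]]]]].
move=> [W1 [a1 [b1 [hW1 hh]]]].
have [a' ha'] := dist_coker_factor hd (Ext1_zero_unshift extST hK hW1.1 (compm a1 s)).
have h0 : compm (h1 - compm b1 a') g = 0 by rewrite compBm hh ha' -compmA subrr.
have [psi hpsi] := dist_coker_factor (dist_rotate hd) h0.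
have [t ht] := dist_ker_factor hdD (Ext1_zero_shift_sub extSV hK hND (compm be psi)).
have -> : h1 = compm b1 a' + compm (compm al t) h by rewrite -ht -hpsi addrC subrK.
apply: factors_WD; first by exists W1, a', b1.
by exists WD, (compm t h), al; split => //; rewrite compmA.
Qed.

Lemma Cplus_reflection (Z : Ob) : exists (C' : Ob) (q : Mor Z C'),
  [/\ Cplus T U V C', cone_in_S q
    & forall (D : Ob) (k : Mor Z D), Cplus T U V D -> exists k' : Mor C' D, k = compm k' q].
Proof.
have [UZ [NZ [i [p [c [hUZ hNZ hdi]]]]]] := cotorsion_triangle cotUV Z.
have [K [T0 [k [b [r [hK hT0 hdk]]]]]] := cotorsion_triangle_unshift cotST UZ.
have [C' [q [r' hdq]]] := dist_complete (compm i k).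
exists C', q; split; last first.
- move=> D kk [WD [ND [al [be [ga [[hWD _] hND hdD]]]]]].
  have [t ht] := dist_ker_factor hdD
    (Ext1_zero_shift_sub extUV hUZ hND (compm be (compm kk i))).
  have hkk : compm kk (compm i k) = 0.
    by rewrite compmA ht -compmA (Ext1_zero_unshift extST hK hWD (compm t k)) compm0.
  exact: dist_coker_factor hdq hkk.
- by exists K, (compm i k), r'.
- have hWT0 : W T0 := conj hT0 (U_cone_of_S hK hUZ hdk).
  have [f1 [g1 [hd1 _ _ _ _]]] := octahedral hdk hdi hdq.
  by exists T0, NZ, f1, g1, (compm (shiftm b) c).
Qed.

Lemma cokernelW_iso (A B Cc C' : Ob) (f : Mor A B) (beta : Mor B Cc)
    (g : Mor B C') (eps : Mor C' Cc) :
  is_cokernelW S T U V f beta -> Hsub S T U V Cc -> Hsub S T U V C' ->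
  eqW T U (compm g f) 0 -> beta = compm eps g ->
  (forall h : Mor C' C', factors_W T U (compm h g) -> factors_W T U h) ->
  exists eta : Mor Cc C', isoW T U eta /\ eqW T U (compm eta beta) g.
Proof.
move=> [hbf huniv] hCc hC' hgf heps hepi.
have [[eta heta] _] := huniv C' g hC' hgf.
exists eta; split => //; exists eps; split.
- have [_ uniq] := huniv Cc beta hCc hbf; apply: uniq; rewrite /eqW.
    have -> : compm (compm eps eta) beta - beta = compm eps (compm eta beta - g).
      by rewrite compmB compmA -heps.
    exact: factors_W_compl heta.
  by rewrite comp1m subrr; apply: factors_W0.
- by apply: hepi; rewrite compBm comp1m -compmA -heps.
Qed.

End Heart.
End Triangulated.

Theorem lemma5p1 (C : tcat) (HC : triangulated C)
  (S T U V : Ob C -> Prop) (Htw : twin_cotorsion_pair S T U V)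
  (A B Cc : Ob C)
  (HA : Hsub S T U V A) (HB : Hsub S T U V B) (HCc : Hsub S T U V Cc)
  (f : Mor A B) (beta : Mor B Cc)
  (Hcok : is_cokernelW S T U V f beta) :
  exists (C' : Ob C) (g : Mor B C') (eta : Mor Cc C'),
    [/\ Hsub S T U V C',
        isoW T U eta,
        eqW T U (compm eta beta) g
      & exists (X : Ob C) (s : Mor X B) (h : Mor C' (shift X)),
          S (shift X) /\ dist s g h].
Proof.
case: HA => _ [XA [WA [x [a [w [hXA hWA hdA]]]]]].
have [Z [z [e hdz]]] := dist_complete HC (compm f x).
have [C' [q [hC'p hq hfac]]] := Cplus_reflection HC Htw Z.
have hg : cone_in_S S (compm q z).
  by apply: (cone_in_S_comp HC Htw) hq; exists XA, (compm f x), e.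
have hC' : Hsub S T U V C' := conj hC'p (Cminus_cone_in_S HC Htw HB.2 hg).
have hgf : eqW T U (compm (compm q z) f) 0.
  have hgfx : compm (compm (compm q z) f) x = 0.
    by rewrite -!(compmA HC) (dist_comp0 HC hdz) compm0.
  have [c ->] := dist_coker_factor HC hdA hgfx.
  by rewrite /eqW subr0; exists WA, a, c.
have [eps heps] : exists eps : Mor C' Cc, beta = compm eps (compm q z).
  have hbfx : compm beta (compm f x) = 0.
    case: Hcok; rewrite /eqW subr0 (compmA HC) => hbf _.
    exact: (factors_W_comp_unshift HC Htw x hXA hbf).
  have [kk ->] := dist_coker_factor HC hdz hbfx.
  have [k' ->] := hfac Cc kk HCc.1.
  by exists k'; rewrite (compmA HC).
have [eta [heta hbeta]] := cokernelW_iso HC Htw Hcok HCc hC' hgf heps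
  (fun h => factors_W_cancel HC Htw hg hC'p).
by exists C', (compm q z), eta.
Qed.
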